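(* Let $(\Omega,\sqsubseteq)$ be a poset and $\mathcal{R}:\Omega\to\wp(\Omega)$ satisfy: ($\mathcal{R}$-monotonicity) if $\omega'\sqsubseteq\omega$ then $\mathcal{R}(\omega')\subseteq\mathcal{R}(\omega)$; ($\mathcal{R}$-regularity) $\mathcal{R}(\omega)\in\mathcal{RO}(\Omega,\sqsubseteq)$ for all $\omega$; ($\mathcal{R}$-refinability) if $\nu\in\mathcal{R}(\omega)$ then there is $\omega'\sqsubseteq\omega$ such that for all $\omega''\sqsubseteq\omega'$ there is $\nu'\sqsubseteq\nu$ with $\nu'\in\mathcal{R}(\omega'')$. Then for any $E\in\mathcal{RO}(\Omega,\sqsubseteq)$, we have $\{\omega\in\Omega\mid\mathcal{R}(\omega)\subseteq E\}\in\mathcal{RO}(\Omega,\sqsubseteq)$.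
   Context: $\downarrow E=\{\omega\mid\omega\sqsubseteq\nu\text{ for some }\nu\in E\}$; $\rho(E)=\{\omega\mid\forall\omega'\sqsubseteq\omega\ \exists\omega''\sqsubseteq\omega'\colon\omega''\in\downarrow E\}$; $\mathcal{RO}(\Omega,\sqsubseteq)=\{E\subseteq\Omega\mid\rho(E)=E\}$ is the set of regular open sets of the downset topology of $(\Omega,\sqsubseteq)$. *)

Definition is_poset {Omega : Type} (le : Omega -> Omega -> Prop) : Prop :=
  (forall x, le x x) /\
  (forall x y, le x y -> le y x -> x = y) /\
  (forall x y z, le x y -> le y z -> le x z).

Definition downset {Omega : Type} (le : Omega -> Omega -> Prop) (E : Omega -> Prop)
  : Omega -> Prop :=
  fun w => exists v, E v /\ le w v.

Definition rho {Omega : Type} (le : Omega -> Omega -> Prop) (E : Omega -> Prop)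
  : Omega -> Prop :=
  fun w => forall w', le w' w -> exists w'', le w'' w' /\ downset le E w''.

Definition regular_open {Omega : Type} (le : Omega -> Omega -> Prop) (E : Omega -> Prop)
  : Prop :=
  forall w, rho le E w <-> E w.


(* Regular open sets and [box R E] are downward closed, so [rho] of such a set
   at [w] says that below every [w'] below [w] lies a point of the set.
   Given [w] in [rho (box R E)] and [v] in [R w], to put [v] in [E = rho E],
   refine any [v'] below [v] (which is in [R w]) to a [w'] below [w]; density
   of [box R E] below [w] gives [w''] below [w'] with [R w''] inside [E], and
   refinability yields a point below [v'] in [R w''], hence in [E]. *)

Definition downward_closed {Omega : Type} (le : Omega -> Omega -> Prop)
  (E : Omega -> Prop) : Prop :=
  forall v v', E v -> le v' v -> E v'.

Definition box {Omega : Type} (R : Omega -> Omega -> Prop) (E : Omega -> Prop)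
  : Omega -> Prop :=
  fun w => forall v, R w v -> E v.

Section Preorder.

Variables (Omega : Type) (le : Omega -> Omega -> Prop).
Hypothesis le_refl : forall x, le x x.
Hypothesis le_trans : forall x y z, le x y -> le y z -> le x z.

Lemma rho_subset (E : Omega -> Prop) w : E w -> rho le E w.
Proof.
  intros Ew w' Hw'. exists w'. split; [apply le_refl |].
  exists w. split; assumption.
Qed.

Lemma regular_openI (E : Omega -> Prop) :
  (forall w, rho le E w -> E w) -> regular_open le E.
Proof.
  intros Hrho w. split; [apply Hrho | apply rho_subset].
Qed.

Lemma regular_open_downward_closed (E : Omega -> Prop) :
  regular_open le E -> downward_closed le E.
Proof.
  intros HE v v' Ev Hv'. apply HE. intros u Hu.
  exists u. split; [apply le_refl |].
  exists v. split; [exact Ev | eapply le_trans; eassumption].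
Qed.

Lemma rho_downward_closed (E : Omega -> Prop) w :
  downward_closed le E -> rho le E w ->
  forall w', le w' w -> exists w'', le w'' w' /\ E w''.
Proof.
  intros HE Hw w' Hw'.
  destruct (Hw w' Hw') as [w'' [Hw'' [u [Eu Hu]]]].
  exists w''. split; [exact Hw'' | exact (HE u w'' Eu Hu)].
Qed.

Section Box.

Variable R : Omega -> Omega -> Prop.
Hypothesis R_mono : forall w w', le w' w -> forall v, R w' v -> R w v.
Hypothesis R_downward_closed : forall w, downward_closed le (R w).
Hypothesis R_refine : forall w v, R w v ->
  exists w', le w' w /\ forall w'', le w'' w' -> exists v', le v' v /\ R w'' v'.

Lemma box_downward_closed (E : Omega -> Prop) : downward_closed le (box R E).
Proof.
  intros w w' Hw Hw' v Rv. apply Hw. exact (R_mono w w' Hw' v Rv).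
Qed.

Lemma rho_box_subset (E : Omega -> Prop) w :
  regular_open le E -> rho le (box R E) w -> box R E w.
Proof.
  intros HE Hw v Rv. apply HE. intros v' Hv'.
  destruct (R_refine w v' (R_downward_closed w v v' Rv Hv')) as [w' [Hw' Hrefine]].
  destruct (rho_downward_closed (box R E) w (box_downward_closed E) Hw w' Hw')
    as [w'' [Hw'' Ew'']].
  destruct (Hrefine w'' Hw'') as [u [Hu Ru]].
  exists u. split; [exact Hu |]. exists u. split; [exact (Ew'' u Ru) | apply le_refl].
Qed.

Lemma regular_open_box (E : Omega -> Prop) :
  regular_open le E -> regular_open le (box R E).
Proof.
  intros HE. apply regular_openI. intro w. exact (rho_box_subset E w HE).
Qed.

End Box.

End Preorder.

Theorem lemma3p10 (Omega : Type) (le : Omega -> Omega -> Prop)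
  (Hposet : is_poset le)
  (R : Omega -> Omega -> Prop)
  (* R w is the set R(w); membership ν ∈ R(ω) is [R w v] *)
  (Rmono : forall w w', le w' w -> forall v, R w' v -> R w v)
  (Rreg : forall w, regular_open le (R w))
  (Rrefine : forall w v, R w v ->
     exists w', le w' w /\
       forall w'', le w'' w' -> exists v', le v' v /\ R w'' v')
  (E : Omega -> Prop) (HE : regular_open le E) :
  regular_open le (fun w => forall v, R w v -> E v).
Proof.
  destruct Hposet as [le_refl [_ le_trans]].
  apply (regular_open_box Omega le le_refl R Rmono); [| exact Rrefine | exact HE].
  intro w. exact (regular_open_downward_closed Omega le le_refl le_trans (R w) (Rreg w)).
Qed.
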